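(* There exist absolute constants $\kappa_D>0$ and $C>0$ such that, for diffusive deposition, every configuration $\sigma\in\mathbb N^N$ with $|\sigma|<N/2$ and every $i\in G_N$, $$P\big(\text{explorer attaches to pile } i\,\big|\,\sigma\big)\ge\kappa_D\frac{\sigma_i^2+1}{N}\exp\Big(-\frac3N\Big(\sum_{j=1}^N\sigma_j(\sigma_j+1)\Big)\Big(1+C\frac{|\sigma|}{N}\Big)\Big).$$
   Context: Diffusive deposition: for $N\ge2$, $G_N=\{1,\dots,N\}$, a configuration $\sigma\in\mathbb N^N$ gives column (pile) heights, $|\sigma|=\sum_i\sigma_i$. Given $\sigma$, an explorer is a walk $(X_n,Z_n)_{n\ge0}$ with $(X_n)$ i.i.d. uniform on $G_N$, $Z_0=\max_i\sigma_i+1$, and $(Z_{n+1}-Z_n)$ i.i.d. uniform on $\{-1,1\}$ independent of $(X_n)$. With $n^*=\inf\{n:Z_n\le\sigma_{X_n}\}$, the explorer attaches to pile $X_{n^*}$ (whose height then increases by one). *)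

From Stdlib Require Import Reals ZArith.
Open Scope R_scope.

(* Piles are indexed 0 .. N-1 (pile k here = pile k+1 of the paper).
   A configuration is sigma : nat -> nat, only sigma 0 .. sigma (N-1) matter. *)

Fixpoint rsum (n : nat) (f : nat -> R) : R :=
  match n with O => 0 | S k => rsum k f + f k end.

(* nsum n f = f 0 + ... + f (n-1) in nat;  |sigma| = nsum N sigma *)
Fixpoint nsum (n : nat) (f : nat -> nat) : nat :=
  match n with O => O | S k => (nsum k f + f k)%nat end.

Fixpoint nmax (n : nat) (f : nat -> nat) : nat :=
  match n with O => O | S k => Nat.max (nmax k f) (f k) end.

Definition explorer_start (N : nat) (sigma : nat -> nat) : Z :=
  (Z.of_nat (nmax N sigma) + 1)%Z.

(* attach_within N sigma i T z
   = P( n* <= T and X_{n*} = i ) for the explorer whose vertical walk is at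
   height z at time 0 (with z > max sigma, so no attachment at time 0).
   It is the exact probability, i.e. the uniform average over the 2^T N^T
   equally likely step sequences ((Z_{n+1}-Z_n), X_{n+1})_{n<T}, written by
   grouping the sum according to the first step (e, x) in {-1,1} x G_N:
   if z+e <= sigma_x the explorer attaches to x at that step, otherwise the
   remaining T-1 steps are explored from height z+e. *)
Fixpoint attach_within (N : nat) (sigma : nat -> nat) (i : nat) (T : nat) (z : Z)
  : R :=
  match T with
  | O => 0
  | S T' =>
      rsum N (fun x =>
        let v (z' : Z) : R :=
          if Z.leb z' (Z.of_nat (sigma x))
          then (if Nat.eqb x i then 1 else 0)
          else attach_within N sigma i T' z' in
        / (2 * INR N) * (v (z - 1)%Z + v (z + 1)%Z))
  end.

(* The attachment probability P(explorer attaches to pile i | sigma) is the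
   limit as T -> oo of attach_within N sigma i T (explorer_start N sigma)
   (continuity of probability along the increasing events {n* <= T, X_{n*}=i}). *)

(* The attachment probability from height [z] is the increasing limit of the
   finite-horizon probabilities [attach_within T z], which obey the one-step
   recursion [u (S T) = walk_step (u T)], so the limit is a supersolution.  As
   the explorer always sticks at height 0, a discrete maximum principle puts
   below it every subsolution vanishing at height [2 M + 3] ([M] the maximal
   height).  With [s = sigma i], [p j] the fraction of piles of height at least
   [j] and [Lam = sum_j sigma_j (sigma_j + 1) / N], the subsolution is zero
   below a base level, a concave quadratic ramp of length about
   [s / (1 + Lam)] up to level [s + 1], and above it a product of factors
   [cutoff k * prod_t (1 - p (k + t)) / (1 + p (k + t + 2))].  Since
   [p j <= 1/2] for [j >= 1], each quotient is at least [exp (-3 p (k + t))],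
   and sums of [p] over levels are controlled by [Lam].  This gives
   [(s^2 + 1) exp (-3 Lam) / (2^18 N)] at the starting height, which is
   stronger than the claim with [C = 1]. *)

From Stdlib Require Import Reals ZArith Lra Lia Psatz.
Open Scope R_scope.

Lemma rsum_ext n f g : (forall x, (x < n)%nat -> f x = g x) -> rsum n f = rsum n g.
Proof.
  induction n as [|n IH]; intros Hfg; simpl; [reflexivity|].
  rewrite IH by (intros; apply Hfg; lia). rewrite Hfg by lia. reflexivity.
Qed.

Lemma rsum_le n f g : (forall x, (x < n)%nat -> f x <= g x) -> rsum n f <= rsum n g.
Proof.
  induction n as [|n IH]; intros Hfg; simpl; [lra|].
  assert (rsum n f <= rsum n g) by (apply IH; intros; apply Hfg; lia).
  assert (f n <= g n) by (apply Hfg; lia). lra.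
Qed.

Lemma rsum_plus n f g : rsum n (fun x => f x + g x) = rsum n f + rsum n g.
Proof. induction n as [|n IH]; simpl; [lra|]. rewrite IH. ring. Qed.

Lemma rsum_scal n c f : rsum n (fun x => c * f x) = c * rsum n f.
Proof. induction n as [|n IH]; simpl; [ring|]. rewrite IH. ring. Qed.

Lemma rsum_opp n f : rsum n (fun x => - f x) = - rsum n f.
Proof. induction n as [|n IH]; simpl; [ring|]. rewrite IH. ring. Qed.

Lemma rsum_const n c : rsum n (fun _ => c) = INR n * c.
Proof. induction n as [|n IH]; simpl rsum; [simpl; ring|]. rewrite IH, S_INR. ring. Qed.

Lemma rsum_nonneg n f : (forall x, (x < n)%nat -> 0 <= f x) -> 0 <= rsum n f.
Proof.
  intros Hf. rewrite <- (Rmult_0_r (INR n)), <- rsum_const. now apply rsum_le.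
Qed.

Lemma rsum_comm n m (f : nat -> nat -> R) :
  rsum n (fun a => rsum m (fun b => f a b)) = rsum m (fun b => rsum n (fun a => f a b)).
Proof.
  induction n as [|n IH]; simpl.
  - rewrite rsum_const. ring.
  - rewrite IH, <- rsum_plus. reflexivity.
Qed.

Lemma rsum_delta n i f :
  (i < n)%nat -> rsum n (fun x => if Nat.eqb x i then f x else 0) = f i.
Proof.
  induction n as [|n IH]; intros Hi; [lia|]. simpl.
  destruct (Nat.eqb_spec n i) as [-> | Hne].
  - rewrite (rsum_ext _ _ (fun _ => 0)), rsum_const; [ring|].
    intros x Hx. destruct (Nat.eqb_spec x i); [lia|reflexivity].
  - rewrite IH by lia. ring.
Qed.

Lemma rsum_INR n f : rsum n (fun x => INR (f x)) = INR (nsum n f).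
Proof. induction n as [|n IH]; simpl; [reflexivity|]. now rewrite IH, plus_INR. Qed.

Lemma nmax_ge n f x : (x < n)%nat -> (f x <= nmax n f)%nat.
Proof.
  induction n as [|n IH]; intros Hx; [lia|]. simpl.
  destruct (Nat.eq_dec x n) as [-> | Hne]; [lia|]. specialize (IH ltac:(lia)). lia.
Qed.

Fixpoint rprod (n : nat) (f : nat -> R) : R :=
  match n with O => 1 | S k => rprod k f * f k end.

Lemma rprod_ext n f g : (forall x, (x < n)%nat -> f x = g x) -> rprod n f = rprod n g.
Proof.
  induction n as [|n IH]; intros Hfg; simpl; [reflexivity|].
  rewrite IH by (intros; apply Hfg; lia). rewrite Hfg by lia. reflexivity.
Qed.

Lemma rprod_nonneg n f : (forall x, (x < n)%nat -> 0 <= f x) -> 0 <= rprod n f.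
Proof.
  induction n as [|n IH]; intros Hf; simpl; [lra|].
  apply Rmult_le_pos; [apply IH; intros; apply Hf|apply Hf]; lia.
Qed.

Lemma rprod_le n f g :
  (forall x, (x < n)%nat -> 0 <= f x <= g x) -> rprod n f <= rprod n g.
Proof.
  induction n as [|n IH]; intros Hfg; simpl; [lra|].
  assert (0 <= rprod n f) by (apply rprod_nonneg; intros; apply Hfg; lia).
  assert (rprod n f <= rprod n g) by (apply IH; intros; apply Hfg; lia).
  destruct (Hfg n ltac:(lia)). now apply Rmult_le_compat.
Qed.

Lemma rprod_unit n f : (forall x, (x < n)%nat -> 0 <= f x <= 1) -> 0 <= rprod n f <= 1.
Proof.
  intros Hf. split; [apply rprod_nonneg; intros; apply Hf; lia|].
  replace 1 with (rprod n (fun _ => 1)).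
  - apply rprod_le. intros x Hx. specialize (Hf x Hx). lra.
  - induction n as [|n IH]; simpl; [reflexivity|]. rewrite IH; [ring|]. intros; apply Hf; lia.
Qed.

Lemma rprod_mult n f g : rprod n (fun e => f e * g e) = rprod n f * rprod n g.
Proof. induction n as [|n IH]; simpl; [ring|]. rewrite IH. ring. Qed.

Lemma rprod_exp n f : rprod n (fun e => exp (f e)) = exp (rsum n f).
Proof. induction n as [|n IH]; simpl; [now rewrite exp_0|]. now rewrite IH, exp_plus. Qed.

Lemma rprod_S n f : rprod (S n) f = f 0%nat * rprod n (fun e => f (S e)).
Proof.
  induction n as [|n IH]; [simpl; ring|].
  change (rprod (S (S n)) f) with (rprod (S n) f * f (S n)). rewrite IH. simpl. ring.
Qed.

Lemma exp_le_mono x y : x <= y -> exp x <= exp y.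
Proof. intros [Hlt| ->]; [left; now apply exp_increasing|lra]. Qed.

Lemma Z_interval_argmax (f : Z -> R) (a b : Z) : (a <= b)%Z ->
  exists z, (a <= z <= b)%Z /\ forall y, (a <= y <= b)%Z -> f y <= f z.
Proof.
  intros Hab. remember (Z.to_nat (b - a)) as n eqn:Hn. revert b Hab Hn.
  induction n as [|n IH]; intros b Hab Hn.
  - exists a. split; [lia|]. intros y Hy. replace y with a by lia. lra.
  - destruct (IH (b - 1)%Z) as [z [Hz Hmax]]; try lia.
    destruct (Rle_dec (f b) (f z)) as [Hle|Hgt].
    + exists z. split; [lia|]. intros y Hy.
      destruct (Z.eq_dec y b) as [-> | Hne]; [assumption|]. apply Hmax; lia.
    + exists b. split; [lia|]. intros y Hy.
      destruct (Z.eq_dec y b) as [-> | Hne]; [lra|]. specialize (Hmax y ltac:(lia)). lra.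
Qed.

Lemma cv_const c : Un_cv (fun _ => c) c.
Proof. intros e He. exists 0%nat. intros. unfold Rdist. rewrite Rminus_diag, Rabs_R0. lra. Qed.

(* One step of the explorer's vertical walk: [A z] is the weight of attaching
   to the target pile at height [z], and [Q z] the number of the [k] piles over
   which the explorer keeps moving. *)
Section Walk.

Variables (A Q : Z -> R) (k : R).
Hypothesis k_pos : 0 < k.
Hypothesis A_ge0 : forall z, 0 <= A z.
Hypothesis Q_ge0 : forall z, 0 <= Q z.
Hypothesis AQ_le : forall z, A z + Q z <= k.

Definition walk_step (f : Z -> R) (z : Z) : R :=
  / (2 * k) * ((A (z - 1)%Z + Q (z - 1)%Z * f (z - 1)%Z) + (A (z + 1)%Z + Q (z + 1)%Z * f (z + 1)%Z)).

Lemma walk_step_le f g z : (forall y, f y <= g y) -> walk_step f z <= walk_step g z.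
Proof.
  intros Hfg. unfold walk_step. apply Rmult_le_compat_l.
  - left. apply Rinv_0_lt_compat. lra.
  - pose proof (Hfg (z - 1)%Z). pose proof (Hfg (z + 1)%Z).
    pose proof (Q_ge0 (z - 1)%Z). pose proof (Q_ge0 (z + 1)%Z). nra.
Qed.

Lemma walk_step_unit f z : (forall y, 0 <= f y <= 1) -> 0 <= walk_step f z <= 1.
Proof.
  intros Hf. unfold walk_step.
  pose proof (Hf (z - 1)%Z). pose proof (Hf (z + 1)%Z).
  pose proof (Q_ge0 (z - 1)%Z). pose proof (Q_ge0 (z + 1)%Z).
  pose proof (A_ge0 (z - 1)%Z). pose proof (A_ge0 (z + 1)%Z).
  pose proof (AQ_le (z - 1)%Z). pose proof (AQ_le (z + 1)%Z).
  set (S := (A (z - 1)%Z + Q (z - 1)%Z * f (z - 1)%Z) + (A (z + 1)%Z + Q (z + 1)%Z * f (z + 1)%Z)).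
  assert (0 <= S <= 2 * k) by (unfold S; split; nra).
  split.
  - apply Rmult_le_pos; [left; apply Rinv_0_lt_compat|]; lra.
  - apply Rmult_le_reg_l with (2 * k); [lra|].
    rewrite <- Rmult_assoc, Rinv_r by lra. lra.
Qed.

Lemma walk_step_sub f g z : walk_step f z - walk_step g z =
  / (2 * k) * (Q (z - 1)%Z * (f (z - 1)%Z - g (z - 1)%Z) + Q (z + 1)%Z * (f (z + 1)%Z - g (z + 1)%Z)).
Proof. unfold walk_step. ring. Qed.

Lemma Q_le z : Q z <= k.
Proof. pose proof (A_ge0 z). pose proof (AQ_le z). lra. Qed.

(* At a positive maximum [m] of [g - w] the subsolution inequality forces
   [Q (z-1) = k] and [g - w = m] at [z - 1]; since [Q 0 = 0] this cannot
   propagate down to [z = 0]. *)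
Lemma walk_max_descent (w g : Z -> R) (h z : Z) (m : R) :
  Q 0%Z = 0 -> (forall y, walk_step w y <= w y) ->
  (forall y, (1 <= y <= h + 1)%Z -> g y - w y <= m) ->
  (1 <= z <= h)%Z -> 0 < m -> g z - w z = m -> g z <= walk_step g z ->
  (2 <= z)%Z /\ g (z - 1)%Z - w (z - 1)%Z = m.
Proof.
  intros Q0 w_super d_le Hz m_pos d_z g_sub.
  pose proof (walk_step_sub g w z) as Hdiff. pose proof (w_super z).
  set (dm := g (z - 1)%Z - w (z - 1)%Z) in *. set (dp := g (z + 1)%Z - w (z + 1)%Z) in *.
  assert (dp_le : dp <= m) by (apply d_le; lia).
  pose proof (Q_ge0 (z - 1)%Z). pose proof (Q_le (z - 1)%Z).
  pose proof (Q_ge0 (z + 1)%Z). pose proof (Q_le (z + 1)%Z).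
  assert (Hp : Q (z + 1)%Z * dp <= k * m) by nra.
  assert (Hm : k * m <= Q (z - 1)%Z * dm).
  { assert (2 * k * m <= Q (z - 1)%Z * dm + Q (z + 1)%Z * dp); [|lra].
    apply Rmult_le_reg_l with (/ (2 * k)); [apply Rinv_0_lt_compat; lra|].
    replace (/ (2 * k) * (2 * k * m)) with m by (field; lra). lra. }
  destruct (Z.eq_dec z 1) as [->|Hz1].
  - exfalso. change (1 - 1)%Z with 0%Z in Hm. rewrite Q0 in Hm. nra.
  - split; [lia|]. assert (dm <= m) by (apply d_le; lia).
    destruct (Rle_dec 0 dm); nra.
Qed.

Lemma walk_max_principle (w g : Z -> R) (h : Z) :
  Q 0%Z = 0 -> (forall y, 0 <= w y) -> (forall y, walk_step w y <= w y) ->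
  g (h + 1)%Z <= 0 ->
  (forall y, (1 <= y <= h)%Z -> 0 < g y -> g y <= walk_step g y) ->
  forall z, (1 <= z <= h)%Z -> g z <= w z.
Proof.
  intros Q0 w_ge0 w_super g_top g_sub z Hz.
  destruct (Z_interval_argmax (fun y => g y - w y) 1 (h + 1)) as [zm [Hzm Hmax]]; [lia|].
  set (m := g zm - w zm) in *.
  destruct (Rle_dec m 0) as [m_le|m_pos%Rnot_le_lt].
  { specialize (Hmax z ltac:(lia)). lra. }
  exfalso.
  assert (no_max : forall j : nat, forall y, Z.of_nat j = y -> (1 <= y <= h)%Z -> g y - w y <> m).
  { induction j as [|j IH]; intros y Hy Hyh d_y; [lia|].
    assert (0 < g y) by (pose proof (w_ge0 y); lra).
    destruct (walk_max_descent w g h y m Q0 w_super Hmax Hyh m_pos d_y (g_sub y Hyh ltac:(lra)))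
      as [Hy2 d_y1].
    apply (IH (y - 1)%Z); [lia|lia|exact d_y1]. }
  assert (Hzh : (zm <= h)%Z).
  { destruct (Z.eq_dec zm (h + 1)) as [E|]; [|lia].
    exfalso. pose proof (w_ge0 (h + 1)%Z). unfold m in m_pos. rewrite E in m_pos. lra. }
  apply (no_max (Z.to_nat zm) zm); [lia|lia|reflexivity].
Qed.

Section Iteration.

Variable u : nat -> Z -> R.
Hypothesis u_0 : forall z, u O z = 0.
Hypothesis u_S : forall T z, u (S T) z = walk_step (u T) z.

Lemma walk_unit T z : 0 <= u T z <= 1.
Proof.
  revert z. induction T as [|T IH]; intros z.
  - rewrite u_0. lra.
  - rewrite u_S. now apply walk_step_unit.
Qed.

Lemma walk_incr T z : u T z <= u (S T) z.
Proof.
  revert z. induction T as [|T IH]; intros z.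
  - rewrite u_0. apply walk_unit.
  - rewrite (u_S (S T)), u_S. now apply walk_step_le.
Qed.

Lemma walk_cv z : {l | Un_cv (fun T => u T z) l}.
Proof.
  apply growing_cv.
  - intro T. apply walk_incr.
  - exists 1. intros x [T ->]. apply walk_unit.
Qed.

Definition walk_limit z : R := proj1_sig (walk_cv z).

Lemma walk_limit_cv z : Un_cv (fun T => u T z) (walk_limit z).
Proof. exact (proj2_sig (walk_cv z)). Qed.

Lemma walk_limit_ge0 z : 0 <= walk_limit z.
Proof.
  rewrite <- (u_0 z). apply (growing_ineq (fun T => u T z)); [|apply walk_limit_cv].
  intro T. apply walk_incr.
Qed.

Lemma walk_limit_super z : walk_step walk_limit z <= walk_limit z.
Proof.
  apply (Rle_cv_lim (Un := fun T => walk_step (u T) z) (Vn := fun T => u (S T) z)).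
  - intro T. rewrite u_S. lra.
  - unfold walk_step.
    repeat apply CV_plus || apply CV_mult; apply cv_const || apply walk_limit_cv.
  - apply Un_cv_ext with (fun T => u (T + 1)%nat z).
    + intro T. now rewrite Nat.add_1_r.
    + exact (CV_shift' _ 1 _ (walk_limit_cv z)).
Qed.

End Iteration.

End Walk.

Definition reach (sigma : nat -> nat) (z : Z) (x : nat) : R :=
  if Z.leb z (Z.of_nat (sigma x)) then 1 else 0.

Definition low_count (N : nat) (sigma : nat -> nat) (z : Z) : R :=
  rsum N (fun x => 1 - reach sigma z x).

Lemma reach_unit sigma z x : 0 <= reach sigma z x <= 1.
Proof. unfold reach. destruct (Z.leb _ _); lra. Qed.

Lemma reach_nat sigma (j : nat) x :
  reach sigma (Z.of_nat j) x = if Nat.leb j (sigma x) then 1 else 0.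
Proof.
  unfold reach. destruct (Z.leb_spec (Z.of_nat j) (Z.of_nat (sigma x))), (Nat.leb_spec j (sigma x));
    reflexivity || lia.
Qed.

Lemma low_count_nonneg N sigma z : 0 <= low_count N sigma z.
Proof. apply rsum_nonneg. intros x _. pose proof (reach_unit sigma z x). lra. Qed.

Lemma reach_add_low_count N sigma i z :
  (i < N)%nat -> reach sigma z i + low_count N sigma z <= INR N.
Proof.
  intros Hi. unfold low_count.
  rewrite <- (rsum_delta N i (reach sigma z)) by exact Hi.
  rewrite <- rsum_plus, <- (Rmult_1_r (INR N)), <- rsum_const.
  apply rsum_le. intros x _. pose proof (reach_unit sigma z x).
  destruct (Nat.eqb x i); lra.
Qed.

Lemma low_count_0 N sigma : low_count N sigma 0%Z = 0.
Proof.
  unfold low_count. rewrite (rsum_ext _ _ (fun _ => 0)); [rewrite rsum_const; ring|].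
  intros x _. unfold reach. destruct (Z.leb_spec 0 (Z.of_nat (sigma x))); [ring|lia].
Qed.

Lemma rsum_attach_split N sigma i z U : (i < N)%nat ->
  rsum N (fun x => if Z.leb z (Z.of_nat (sigma x)) then (if Nat.eqb x i then 1 else 0) else U) =
  reach sigma z i + low_count N sigma z * U.
Proof.
  intros Hi.
  rewrite (rsum_ext _ _ (fun x => (if Nat.eqb x i then reach sigma z x else 0) + U * (1 - reach sigma z x))).
  - rewrite rsum_plus, rsum_delta, rsum_scal by exact Hi. unfold low_count. ring.
  - intros x _. unfold reach. destruct (Z.leb _ _), (Nat.eqb x i); ring.
Qed.

Lemma attach_within_S N sigma i T z : (i < N)%nat ->
  attach_within N sigma i (S T) z =
  walk_step (fun y => reach sigma y i) (low_count N sigma) (INR N) (attach_within N sigma i T) z.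
Proof.
  intros Hi. simpl attach_within. cbv zeta.
  rewrite rsum_scal, rsum_plus, !rsum_attach_split by exact Hi. reflexivity.
Qed.

Lemma count_le c h L :
  rsum L (fun t => if Nat.leb (c + t) h then 1 else 0) <= INR (h + 1 - c).
Proof.
  enough (Hmin : rsum L (fun t => if Nat.leb (c + t) h then 1 else 0) <= INR (Nat.min L (h + 1 - c))).
  { eapply Rle_trans; [exact Hmin|]. apply le_INR. lia. }
  induction L as [|L IH]; simpl rsum; [simpl; lra|].
  destruct (Nat.leb_spec (c + L) h).
  - replace (Nat.min (S L) (h + 1 - c)) with (S (Nat.min L (h + 1 - c))) by lia.
    rewrite S_INR. lra.
  - apply Rle_trans with (INR (Nat.min L (h + 1 - c))); [lra|apply le_INR; lia].
Qed.

Lemma rsum_descending a D : rsum D (fun e => INR (a - e)) <= INR a * (INR a + 1) / 2.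
Proof.
  enough (H : rsum D (fun e => INR (a - e)) + INR (a - D) * (INR (a - D) + 1) / 2
              <= INR a * (INR a + 1) / 2).
  { pose proof (pos_INR (a - D)). nra. }
  induction D as [|D IH]; simpl rsum; [rewrite Nat.sub_0_r; lra|].
  destruct (Nat.le_gt_cases a D).
  - replace (a - S D)%nat with 0%nat by lia. replace (a - D)%nat with 0%nat in * by lia.
    simpl in *. lra.
  - replace (a - D)%nat with (S (a - S D)) in * by lia. rewrite S_INR in *. nra.
Qed.

Lemma exp_le_ratio p p' : 0 <= p' <= p -> p <= 1 / 2 -> exp (- (3 * p)) <= (1 - p) / (1 + p').
Proof.
  intros Hp' Hp.
  replace (- (3 * p)) with (- (2 * p) + - p) by ring. rewrite exp_plus, !exp_Ropp.
  pose proof (exp_ineq1_le (2 * p)). pose proof (exp_ineq1_le p).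
  pose proof (exp_pos (2 * p)). pose proof (exp_pos p).
  unfold Rdiv. apply Rmult_le_compat; try (left; apply Rinv_0_lt_compat; lra).
  - apply Rle_trans with (/ (1 + 2 * p)); [apply Rinv_le_contravar; lra|].
    apply Rmult_le_reg_l with (1 + 2 * p); [lra|]. rewrite Rinv_r by lra. nra.
  - apply Rle_trans with (/ (1 + p)); apply Rinv_le_contravar; lra.
Qed.

(* [cutoff H] vanishes from [H] on, giving the profile a zero boundary value,
   while [cutoff_step] preserves the subsolution inequality. *)
Definition cutoff (H k : nat) : R := INR (H - k) / INR (H - k + 1).

Lemma cutoff_unit H k : 0 <= cutoff H k <= 1.
Proof.
  unfold cutoff. pose proof (pos_INR (H - k)). rewrite plus_INR. simpl. split.
  - apply Rmult_le_pos; [lra|left; apply Rinv_0_lt_compat; lra].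
  - apply Rmult_le_reg_l with (INR (H - k) + 1); [lra|].
    unfold Rdiv. rewrite <- Rmult_assoc, Rinv_r_simpl_m; lra.
Qed.

Lemma cutoff_step H k : cutoff H k * (2 - cutoff H (S k)) <= 1.
Proof.
  unfold cutoff. destruct (Nat.le_gt_cases H k).
  - replace (H - k)%nat with 0%nat by lia. simpl. lra.
  - replace (H - k)%nat with (S (H - S k)) by lia. rewrite !plus_INR, S_INR. simpl.
    pose proof (pos_INR (H - S k)).
    replace ((INR (H - S k) + 1) / (INR (H - S k) + 1 + 1) * (2 - INR (H - S k) / (INR (H - S k) + 1)))
      with 1 by (field; lra).
    lra.
Qed.

Lemma cutoff_prod H c D : (c + D <= H)%nat ->
  rprod D (fun e => cutoff H (c + e)) = INR (H - c + 1 - D) / INR (H - c + 1).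
Proof.
  intros HD. induction D as [|D IH]; simpl rprod.
  - rewrite Nat.sub_0_r. field. rewrite plus_INR. pose proof (pos_INR (H - c)). simpl. lra.
  - rewrite IH by lia. unfold cutoff.
    replace (H - c + 1 - D)%nat with (H - (c + D) + 1)%nat by lia.
    replace (H - c + 1 - S D)%nat with (H - (c + D))%nat by lia.
    rewrite !plus_INR. pose proof (pos_INR (H - (c + D))). pose proof (pos_INR (H - c)). simpl.
    field. lra.
Qed.

Lemma cutoff_beyond H k : (H <= k)%nat -> cutoff H k = 0.
Proof. intros Hk. unfold cutoff. replace (H - k)%nat with 0%nat by lia. simpl. lra. Qed.

Lemma ratio_step_le a a' t p' q : 0 <= a <= 1 -> 0 <= a' <= 1 -> 0 <= t <= 1 -> 0 <= p' <= 1 ->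
  0 <= q -> a * (2 - a') <= 1 ->
  a * (q / (1 + p') * t) * (2 - (1 - p') * (a' * t)) <= q.
Proof.
  intros Ha Ha' Ht Hp Hq Hstep.
  assert (Hat : a * (2 - (1 - p') * (a' * t)) <= 2 - (1 - p') * t).
  { replace (a * (2 - (1 - p') * (a' * t))) with (a * (2 - a') + a * a' * (1 - (1 - p') * t)) by ring.
    assert (0 <= 1 - (1 - p') * t) by nra. assert (a * a' <= 1) by nra. nra. }
  assert (Ht2 : t * (2 - (1 - p') * t) <= 1 + p').
  { assert (0 <= (1 - t) * (1 - t)) by nra. assert (p' * (t * t) <= p' * 1) by (apply Rmult_le_compat_l; nra). nra. }
  replace (a * (q / (1 + p') * t) * (2 - (1 - p') * (a' * t)))
    with (q / (1 + p') * (t * (a * (2 - (1 - p') * (a' * t))))) by ring.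
  assert (0 <= q / (1 + p')) by (apply Rmult_le_pos; [lra|left; apply Rinv_0_lt_compat; lra]).
  apply Rle_trans with (q / (1 + p') * (1 + p')); [|right; field; lra].
  apply Rmult_le_compat_l; [assumption|]. nra.
Qed.

Section Ramp.

Variables (m P d : R).
Hypothesis m_ge1 : 1 <= m.
Hypothesis P_range : 0 <= P <= 1 / 2.
Hypothesis d_unit : 0 <= d <= 1.
Hypothesis d_small : 1 < 4 * d * m -> m = 1.

(* The shift flattens the top of the ramp, [ramp m - ramp (m - 1) = 2 - ramp_shift],
   to absorb the loss [d * ramp m] at its upper end (see [ramp_sub_end]). *)
Definition ramp_shift : R := if Rle_dec (4 * d * m) 1 then 2 * d * m * (m + 1) else 0.
Definition ramp_scale : R := / (2 * (P * (m + 1) ^ 2 + 4)).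
Definition ramp (y : R) : R := y * (2 * m + 1 - ramp_shift - y).

Lemma ramp_shift_bounds : 0 <= ramp_shift <= (m + 1) / 2.
Proof.
  unfold ramp_shift. destruct (Rle_dec (4 * d * m) 1); [split; nra|lra].
Qed.

Lemma ramp_budget : (P + d) * ramp m + (1 - P) * (2 - ramp_shift) <= 2 * (P * (m + 1) ^ 2 + 4).
Proof.
  unfold ramp, ramp_shift. destruct (Rle_dec (4 * d * m) 1) as [Hd|Hd].
  - set (t := 2 * d * m * (m + 1)).
    assert (0 <= t <= (m + 1) / 2) by (unfold t; split; nra).
    assert (d * (m * (2 * m + 1 - t - m)) <= t / 2) by (unfold t; nra).
    assert (P * (m * (2 * m + 1 - t - m)) <= P * (m + 1) ^ 2) by (apply Rmult_le_compat_l; nra).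
    assert (0 <= P * (m + 1) ^ 2) by nra.
    nra.
  - rewrite d_small by lra. nra.
Qed.

Lemma ramp_scale_pos : 0 < ramp_scale.
Proof. unfold ramp_scale. apply Rinv_0_lt_compat. nra. Qed.

Lemma ramp_scale_eq : ramp_scale * (P * (m + 1) ^ 2 + 4) = / 2.
Proof. unfold ramp_scale. field. nra. Qed.

Lemma ramp_nonneg y : 0 <= y <= m -> 0 <= ramp y.
Proof. intros Hy. unfold ramp. pose proof ramp_shift_bounds. nra. Qed.

Lemma ramp_le y : 0 <= y -> ramp y <= (m + 1) ^ 2.
Proof.
  intros Hy. unfold ramp. pose proof ramp_shift_bounds.
  pose proof (Rle_0_sqr (y - m - 1 / 2)). unfold Rsqr in *.
  assert (0 <= y * ramp_shift) by (apply Rmult_le_pos; lra). nra.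
Qed.

(* [ramp] has second difference [-2]; the attachment weight [1] from below pays
   for it and for the factor [1 - P] lost at both neighbours. *)
Lemma ramp_sub_interior y qm qp Fm Fp Ap : 1 <= y <= m - 1 ->
  (1 - P) * (ramp_scale * ramp (y - 1)) <= qm * Fm ->
  (1 - P) * (ramp_scale * ramp (y + 1)) <= qp * Fp -> 0 <= Ap ->
  ramp_scale * ramp y <= / 2 * ((1 + qm * Fm) + (Ap + qp * Fp)).
Proof.
  intros Hy Hm Hp HA. pose proof ramp_scale_pos. pose proof ramp_scale_eq. pose proof (ramp_le y ltac:(lra)).
  assert (E : ramp (y - 1) + ramp (y + 1) = 2 * ramp y - 2) by (unfold ramp; ring).
  assert (ramp_scale * (P * ramp y) <= ramp_scale * (P * (m + 1) ^ 2))
    by (apply Rmult_le_compat_l; nra).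
  nra.
Qed.

Lemma ramp_sub_end qm Fm Ap :
  (1 - P) * (ramp_scale * ramp (m - 1)) <= qm * Fm -> 0 <= Ap ->
  ramp_scale * ramp m <= / 2 * ((1 + qm * Fm) + (Ap + (1 - d) * (ramp_scale * ramp m))).
Proof.
  intros Hm HA. pose proof ramp_scale_pos. pose proof ramp_scale_eq. pose proof ramp_budget.
  assert (E : ramp (m - 1) = ramp m + ramp_shift - 2) by (unfold ramp; ring).
  assert (ramp_scale * ((P + d) * ramp m + (1 - P) * (2 - ramp_shift))
          <= ramp_scale * (2 * (P * (m + 1) ^ 2 + 4))) by (apply Rmult_le_compat_l; lra).
  nra.
Qed.

End Ramp.

Lemma cube_le_exp L : 0 <= L -> (1 + L / 2) ^ 3 <= exp (3 / 2 * L).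
Proof.
  intros HL. replace (3 / 2 * L) with (L / 2 + L / 2 + L / 2) by field. rewrite !exp_plus.
  pose proof (exp_ineq1_le (L / 2)). pose proof (exp_pos (L / 2)).
  replace ((1 + L / 2) ^ 3) with ((1 + L / 2) * (1 + L / 2) * (1 + L / 2)) by ring.
  assert (0 <= 1 + L / 2) by lra.
  apply Rmult_le_compat; try nra.
Qed.

Lemma sq_affine_le_exp L K : 0 <= L -> 0 <= K <= 4 * (1 + 4 * L) + 1 ->
  K ^ 2 * (L + 1) <= 2048 * exp (3 / 2 * L).
Proof.
  intros HL HK. pose proof (cube_le_exp L HL).
  assert (K ^ 2 <= 1024 * (1 + L / 2) ^ 2) by nra.
  assert (0 <= (1 + L / 2) ^ 2) by nra.
  apply Rle_trans with (1024 * (1 + L / 2) ^ 2 * (2 * (1 + L / 2))); [apply Rmult_le_compat; nra|nra].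
Qed.

Section Profile.

Variables (N : nat) (sigma : nat -> nat).
Hypothesis N_pos : (0 < N)%nat.
Hypothesis mass_lt_half : INR (nsum N sigma) < INR N / 2.

Local Notation M := (nmax N sigma).
Definition hfrac (z : Z) : R := rsum N (reach sigma z) / INR N.
Definition lfrac (z : Z) : R := 1 - hfrac z.
Definition Lam : R := rsum N (fun x => INR (sigma x) * (INR (sigma x) + 1)) / INR N.

Lemma INR_N_pos : 0 < INR N.
Proof. apply lt_0_INR. lia. Qed.

Lemma low_count_lfrac z : low_count N sigma z = INR N * lfrac z.
Proof.
  pose proof INR_N_pos. unfold low_count, lfrac, hfrac.
  rewrite (rsum_ext _ _ (fun x => 1 + (-1) * reach sigma z x)) by (intros; ring).
  rewrite rsum_plus, rsum_const, rsum_scal. field. lra.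
Qed.

Lemma hfrac_unit z : 0 <= hfrac z <= 1.
Proof.
  pose proof INR_N_pos. unfold hfrac.
  assert (0 <= rsum N (reach sigma z) <= INR N).
  { split; [apply rsum_nonneg|rewrite <- (Rmult_1_r (INR N)), <- rsum_const; apply rsum_le];
      intros x _; apply reach_unit. }
  split; [apply Rmult_le_pos; [lra|left; now apply Rinv_0_lt_compat]|].
  apply Rmult_le_reg_l with (INR N); [lra|]. unfold Rdiv. rewrite <- Rmult_assoc, Rinv_r_simpl_m; lra.
Qed.

Lemma lfrac_unit z : 0 <= lfrac z <= 1.
Proof. unfold lfrac. pose proof (hfrac_unit z). lra. Qed.

Lemma hfrac_anti z1 z2 : (z1 <= z2)%Z -> hfrac z2 <= hfrac z1.
Proof.
  intros Hz. unfold hfrac, Rdiv. apply Rmult_le_compat_r; [left; apply Rinv_0_lt_compat, INR_N_pos|].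
  apply rsum_le. intros x _. unfold reach.
  destruct (Z.leb_spec z2 (Z.of_nat (sigma x))), (Z.leb_spec z1 (Z.of_nat (sigma x))); lra || lia.
Qed.

Lemma hfrac_above_max z : (Z.of_nat M < z)%Z -> hfrac z = 0.
Proof.
  intros Hz. unfold hfrac. rewrite (rsum_ext _ _ (fun _ => 0)); [rewrite rsum_const; unfold Rdiv; ring|].
  intros x Hx. pose proof (nmax_ge N sigma x Hx). unfold reach in *.
  destruct (Z.leb_spec z (Z.of_nat (sigma x))); [lia|reflexivity].
Qed.

Lemma hfrac_le_half z : (1 <= z)%Z -> hfrac z <= 1 / 2.
Proof.
  intros Hz. pose proof INR_N_pos. unfold hfrac.
  assert (rsum N (reach sigma z) <= INR (nsum N sigma)).
  { rewrite <- rsum_INR. apply rsum_le. intros x _. unfold reach.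
    destruct (Z.leb_spec z (Z.of_nat (sigma x))); [apply (le_INR 1); lia|apply pos_INR]. }
  apply Rmult_le_reg_l with (INR N); [lra|]. unfold Rdiv. rewrite <- Rmult_assoc, Rinv_r_simpl_m; lra.
Qed.

Lemma Lam_nonneg : 0 <= Lam.
Proof.
  unfold Lam. apply Rmult_le_pos; [|left; apply Rinv_0_lt_compat, INR_N_pos].
  apply rsum_nonneg. intros x _. pose proof (pos_INR (sigma x)). nra.
Qed.

Lemma hfrac_moment (j : nat) (c : R) : 0 <= c ->
  (forall h, (j <= h)%nat -> c <= INR h * (INR h + 1)) -> c * hfrac (Z.of_nat j) <= Lam.
Proof.
  intros Hc Hh. unfold hfrac, Lam, Rdiv. rewrite <- Rmult_assoc.
  apply Rmult_le_compat_r; [left; apply Rinv_0_lt_compat, INR_N_pos|].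
  rewrite <- rsum_scal. apply rsum_le. intros x _. rewrite reach_nat.
  destruct (Nat.leb_spec j (sigma x)).
  - rewrite Rmult_1_r. now apply Hh.
  - pose proof (pos_INR (sigma x)). nra.
Qed.

Lemma hfrac_tail k L :
  rsum L (fun t => hfrac (Z.of_nat (k + t))) <= rsum N (fun x => INR (sigma x + 1 - k)) / INR N.
Proof.
  unfold hfrac, Rdiv.
  rewrite (rsum_ext _ _ (fun t => / INR N * rsum N (fun x => reach sigma (Z.of_nat (k + t)) x)))
    by (intros; apply Rmult_comm).
  rewrite rsum_scal, rsum_comm, (Rmult_comm (/ INR N)).
  apply Rmult_le_compat_r; [left; apply Rinv_0_lt_compat, INR_N_pos|].
  apply rsum_le. intros x _. eapply Rle_trans; [|apply (count_le k (sigma x) L)].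
  right. apply rsum_ext. intros t _. apply reach_nat.
Qed.

Lemma exp_penalty_le t : 0 <= t ->
  exp (- (3 / INR N) * rsum N (fun j => INR (sigma j) * (INR (sigma j) + 1)) * (1 + t))
  <= exp (- (3 * Lam)).
Proof.
  intros Ht. apply exp_le_mono. pose proof INR_N_pos. pose proof Lam_nonneg.
  unfold Lam in *. set (S := rsum N _) in *.
  replace (- (3 / INR N) * S * (1 + t)) with (- (3 * (S / INR N)) * (1 + t)) by (field; lra).
  nra.
Qed.

Definition tail_mass (k : nat) : R := rsum (S M) (fun t => hfrac (Z.of_nat (k + t))).

Variable i : nat.
Hypothesis i_lt_N : (i < N)%nat.
Local Notation s := (sigma i).

Lemma height_le_max : (s <= M)%nat.
Proof. now apply nmax_ge. Qed.

Lemma tail_mass_first : INR (s + 1) * tail_mass (s + 1) <= Lam.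
Proof.
  pose proof INR_N_pos as HN. unfold Lam.
  apply Rle_trans with (INR (s + 1) * (rsum N (fun x => INR (sigma x + 1 - (s + 1))) / INR N)).
  { apply Rmult_le_compat_l; [apply pos_INR|apply hfrac_tail]. }
  unfold Rdiv. rewrite <- Rmult_assoc, <- rsum_scal.
  apply Rmult_le_compat_r; [left; now apply Rinv_0_lt_compat|].
  apply rsum_le. intros x _. rewrite plus_INR. simpl.
  destruct (Nat.le_gt_cases (sigma x) s) as [Hle|Hgt].
  - replace (sigma x + 1 - (s + 1))%nat with 0%nat by lia. simpl.
    pose proof (pos_INR s). pose proof (pos_INR (sigma x)). nra.
  - rewrite minus_INR by lia. rewrite !plus_INR. apply lt_INR in Hgt. simpl. pose proof (pos_INR s). nra.
Qed.

Lemma tail_mass_sum D : rsum D (fun e => tail_mass (s + 1 + e)) <= Lam / 2.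
Proof.
  pose proof INR_N_pos as HN. unfold Lam.
  apply Rle_trans with (rsum D (fun e => / INR N * rsum N (fun x => INR ((sigma x - s) - e)))).
  { apply rsum_le. intros e _. eapply Rle_trans; [apply hfrac_tail|].
    right. unfold Rdiv. rewrite Rmult_comm. f_equal. apply rsum_ext. intros x _. f_equal. lia. }
  rewrite rsum_scal, rsum_comm. unfold Rdiv.
  rewrite (Rmult_comm (rsum N _)), Rmult_assoc.
  apply Rmult_le_compat_l; [left; now apply Rinv_0_lt_compat|].
  rewrite Rmult_comm, <- rsum_scal. apply rsum_le. intros x _.
  pose proof (rsum_descending (sigma x - s) D).
  assert (INR (sigma x - s) <= INR (sigma x)) by (apply le_INR; lia).
  pose proof (pos_INR (sigma x - s)). nra.
Qed.

Definition rfactor (j : nat) : R := lfrac (Z.of_nat j) / (1 + hfrac (Z.of_nat (j + 2))).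
Definition theta (k : nat) : R := rprod (S M) (fun t => rfactor (k + t)).
Definition rho (k : nat) : R := cutoff (2 * M + 2) k * theta k.
Definition rho_prod (d : nat) : R := rprod d (fun e => rho (s + 1 + e)).

Lemma rfactor_unit j : 0 <= rfactor j <= 1.
Proof.
  unfold rfactor. pose proof (lfrac_unit (Z.of_nat j)). pose proof (hfrac_unit (Z.of_nat (j + 2))).
  split; [apply Rmult_le_pos; [lra|left; apply Rinv_0_lt_compat; lra]|].
  apply Rmult_le_reg_l with (1 + hfrac (Z.of_nat (j + 2))); [lra|].
  unfold Rdiv. rewrite <- Rmult_assoc, Rinv_r_simpl_m; lra.
Qed.

Lemma rfactor_ge_exp j : (1 <= j)%nat -> exp (- (3 * hfrac (Z.of_nat j))) <= rfactor j.
Proof.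
  intros Hj. apply exp_le_ratio.
  - split; [apply hfrac_unit|apply hfrac_anti; lia].
  - apply hfrac_le_half. lia.
Qed.

Lemma rfactor_above_max j : (M < j)%nat -> rfactor j = 1.
Proof. intros Hj. unfold rfactor, lfrac. rewrite !hfrac_above_max by lia. field. Qed.

Lemma theta_unit k : 0 <= theta k <= 1.
Proof. apply rprod_unit. intros. apply rfactor_unit. Qed.

Lemma theta_ge_exp k : (1 <= k)%nat -> exp (- (3 * tail_mass k)) <= theta k.
Proof.
  intros Hk. unfold theta, tail_mass.
  rewrite <- rsum_scal, <- rsum_opp, <- rprod_exp. apply rprod_le.
  intros t _. split; [left; apply exp_pos|]. apply rfactor_ge_exp. lia.
Qed.

Lemma theta_S k : theta k = rfactor k * theta (S k).
Proof.
  unfold theta. rewrite rprod_S. simpl rprod at 2.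
  rewrite (rfactor_above_max (S (k + M))) by lia. rewrite Nat.add_0_r, Rmult_1_r.
  f_equal. apply rprod_ext. intros. f_equal. lia.
Qed.

Lemma rho_unit k : 0 <= rho k <= 1.
Proof. unfold rho. pose proof (cutoff_unit (2 * M + 2) k). pose proof (theta_unit k). split; nra. Qed.

Lemma rho_step k : (1 <= k)%nat ->
  rho k * (2 - lfrac (Z.of_nat (k + 2)) * rho (S k)) <= lfrac (Z.of_nat k).
Proof.
  intros Hk. unfold rho at 1. rewrite theta_S. unfold rfactor, rho.
  replace (lfrac (Z.of_nat (k + 2))) with (1 - hfrac (Z.of_nat (k + 2))) by reflexivity.
  apply ratio_step_le; try apply cutoff_unit; try apply theta_unit; try apply hfrac_unit;
    try apply cutoff_step. apply lfrac_unit.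
Qed.

Lemma rho_prod_nonneg d : 0 <= rho_prod d.
Proof. apply rprod_nonneg. intros. apply rho_unit. Qed.

Lemma rho_prod_beyond d : (2 * M + 2 < s + 1 + d)%nat -> rho_prod d = 0.
Proof.
  pose proof height_le_max. induction d as [|d IH]; intros Hd; [lia|].
  unfold rho_prod. simpl rprod. fold (rho_prod d).
  destruct (Nat.lt_ge_cases (2 * M + 2) (s + 1 + d)) as [Hlt|Hge].
  - rewrite IH by exact Hlt. ring.
  - unfold rho. rewrite cutoff_beyond by lia. ring.
Qed.

Local Notation top := (s + 1)%nat.

Definition defect : R := 1 - lfrac (Z.of_nat (top + 1)) * rho top.

Lemma defect_unit : 0 <= defect <= 1.
Proof.
  unfold defect. pose proof (lfrac_unit (Z.of_nat (top + 1))). pose proof (rho_unit top). split; nra.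
Qed.

Lemma defect_bound : INR top * defect <= 1 + 4 * Lam.
Proof.
  pose proof (pos_INR top) as Htop. pose proof height_le_max.
  pose proof (lfrac_unit (Z.of_nat (top + 1))). pose proof (cutoff_unit (2 * M + 2) top).
  pose proof (theta_unit top).
  assert (Hsplit : defect <= (1 - lfrac (Z.of_nat (top + 1))) + (1 - cutoff (2 * M + 2) top) + (1 - theta top)).
  { unfold defect, rho.
    set (x := lfrac (Z.of_nat (top + 1))) in *. set (y := cutoff (2 * M + 2) top) in *.
    assert (x * y <= 1) by nra. assert (0 <= x * y) by nra. nra. }
  set (x := lfrac (Z.of_nat (top + 1))) in *. set (y := cutoff (2 * M + 2) top) in *.
  set (t := theta top) in *.
  assert (Hx : INR top * (1 - x) <= Lam).
  { unfold x, lfrac. replace (top + 1)%nat with (s + 2)%nat by lia.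
    replace (1 - (1 - hfrac (Z.of_nat (s + 2)))) with (hfrac (Z.of_nat (s + 2))) by ring.
    apply hfrac_moment; [apply pos_INR|]. intros h Hh. apply le_INR in Hh.
    rewrite plus_INR in *. simpl in *. pose proof (pos_INR s). nra. }
  assert (Hy : INR top * (1 - y) <= 1).
  { unfold y, cutoff. set (r := (2 * M + 2 - top)%nat).
    replace (r + 1)%nat with (S r) by lia. rewrite S_INR. pose proof (pos_INR r).
    assert (INR top <= INR r + 1) by (rewrite <- S_INR; apply le_INR; lia).
    replace (INR top * (1 - INR r / (INR r + 1))) with (INR top / (INR r + 1)) by (field; lra).
    apply Rmult_le_reg_r with (INR r + 1); [lra|].
    unfold Rdiv. rewrite Rmult_assoc, Rinv_l; lra. }
  assert (Ht : INR top * (1 - t) <= 3 * Lam).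
  { pose proof (theta_ge_exp top ltac:(lia)). pose proof (exp_ineq1_le (- (3 * tail_mass top))).
    pose proof tail_mass_first. unfold t. nra. }
  nra.
Qed.

(* [ramp_div] is chosen so that [top * defect <= ramp_div / 4]. *)
Definition ramp_div : nat := Z.to_nat (up (4 * (1 + 4 * Lam))).
Definition ramp_len : nat := Nat.max 1 (Nat.min ((top + 1) / 2) (top / ramp_div)).
Definition ramp_base : nat := (top + 1 - ramp_len)%nat.

Lemma ramp_div_bounds : 4 * (1 + 4 * Lam) <= INR ramp_div <= 4 * (1 + 4 * Lam) + 1.
Proof.
  unfold ramp_div. destruct (archimed (4 * (1 + 4 * Lam))) as [H1 H2]. pose proof Lam_nonneg.
  assert (Hup : 0 < IZR (up (4 * (1 + 4 * Lam)))) by lra. apply lt_0_IZR in Hup.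
  rewrite INR_IZR_INZ, Z2Nat.id by lia. lra.
Qed.

Lemma ramp_div_pos : (1 <= ramp_div)%nat.
Proof.
  pose proof ramp_div_bounds. pose proof Lam_nonneg.
  destruct ramp_div; [simpl in *; lra|lia].
Qed.

Lemma ramp_len_spec : (1 <= ramp_len)%nat /\ (ramp_len <= ramp_base)%nat /\ (ramp_base <= top)%nat /\
  (ramp_len + ramp_base = top + 1)%nat /\
  (ramp_len = 1%nat \/ (ramp_len * ramp_div <= top)%nat) /\ (top <= 2 * ramp_div * ramp_len)%nat.
Proof.
  pose proof ramp_div_pos as Hk.
  pose proof (Nat.div_mod (top + 1) 2 ltac:(lia)). pose proof (Nat.mod_upper_bound (top + 1) 2 ltac:(lia)).
  pose proof (Nat.div_mod top ramp_div ltac:(lia)). pose proof (Nat.mod_upper_bound top ramp_div ltac:(lia)).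
  unfold ramp_base, ramp_len. set (h := ((top + 1) / 2)%nat) in *. set (q := (top / ramp_div)%nat) in *.
  repeat split; nia.
Qed.

Local Notation m := (INR ramp_len).
Local Notation P := (hfrac (Z.of_nat ramp_base)).

Lemma ramp_len_ge1 : 1 <= m.
Proof. destruct ramp_len_spec as [H1 _]. apply (le_INR 1) in H1. simpl in H1. lra. Qed.

Lemma base_frac_range : 0 <= P <= 1 / 2.
Proof. split; [apply hfrac_unit|]. apply hfrac_le_half. pose proof ramp_len_spec. lia. Qed.

Lemma base_frac_moment : P * (m + 1) ^ 2 <= 4 * Lam.
Proof.
  destruct ramp_len_spec as [H1 [H2 _]]. apply le_INR in H1, H2. simpl in H1.
  assert (H : 4 * (INR ramp_base * (INR ramp_base + 1)) * P <= 4 * Lam).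
  { rewrite Rmult_assoc. apply Rmult_le_compat_l; [lra|].
    apply hfrac_moment; [pose proof (pos_INR ramp_base); nra|].
    intros h Hh. apply le_INR in Hh. pose proof (pos_INR ramp_base). nra. }
  pose proof (hfrac_unit (Z.of_nat ramp_base)).
  assert ((m + 1) ^ 2 <= 4 * (INR ramp_base * (INR ramp_base + 1))) by nra. nra.
Qed.

Lemma defect_small : 1 < 4 * defect * m -> m = 1.
Proof.
  intros Hd. destruct ramp_len_spec as [_ [_ [_ [_ [[E|E] _]]]]]; [now rewrite E|exfalso].
  apply le_INR in E. rewrite mult_INR in E.
  pose proof ramp_div_bounds. pose proof defect_bound. pose proof defect_unit. pose proof Lam_nonneg.
  assert (defect * (m * INR ramp_div) <= defect * INR top) by (apply Rmult_le_compat_l; lra).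
  assert (0 < (4 * defect * m - 1) * INR ramp_div) by (apply Rmult_lt_0_compat; lra).
  nra.
Qed.

Definition ramp_top : R := ramp_scale m P * ramp m defect m.

Definition profile (z : Z) : R :=
  if Z.ltb z (Z.of_nat ramp_base) then 0
  else if Z.leb z (Z.of_nat top) then ramp_scale m P * ramp m defect (IZR (z - Z.of_nat ramp_base + 1))
  else ramp_top * rho_prod (Z.to_nat (z - Z.of_nat top)).

Lemma profile_below z : (z < Z.of_nat ramp_base)%Z -> profile z = 0.
Proof. intros Hz. unfold profile. destruct (Z.ltb_spec z (Z.of_nat ramp_base)); [reflexivity|lia]. Qed.

Lemma profile_on_ramp z : (Z.of_nat ramp_base <= z <= Z.of_nat top)%Z ->
  profile z = ramp_scale m P * ramp m defect (IZR (z - Z.of_nat ramp_base + 1)).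
Proof.
  intros Hz. unfold profile.
  destruct (Z.ltb_spec z (Z.of_nat ramp_base)); [lia|].
  destruct (Z.leb_spec z (Z.of_nat top)); [reflexivity|lia].
Qed.

Lemma ramp_coord_bounds z : (Z.of_nat ramp_base <= z <= Z.of_nat top)%Z ->
  1 <= IZR (z - Z.of_nat ramp_base + 1) <= m.
Proof.
  intros Hz. destruct ramp_len_spec as [_ [_ [_ [E _]]]].
  rewrite INR_IZR_INZ. split; apply IZR_le; lia.
Qed.

Lemma profile_upper d : profile (Z.of_nat (top + d)) = ramp_top * rho_prod d.
Proof.
  destruct ramp_len_spec as [_ [_ [Hbt [E _]]]]. destruct d as [|d].
  - rewrite Nat.add_0_r, profile_on_ramp by lia. unfold ramp_top, rho_prod. simpl rprod.
    replace (Z.of_nat top - Z.of_nat ramp_base + 1)%Z with (Z.of_nat ramp_len) by lia.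
    rewrite <- INR_IZR_INZ. ring.
  - unfold profile.
    destruct (Z.ltb_spec (Z.of_nat (top + S d)) (Z.of_nat ramp_base)); [lia|].
    destruct (Z.leb_spec (Z.of_nat (top + S d)) (Z.of_nat top)); [lia|].
    do 3 f_equal. lia.
Qed.

Lemma ramp_top_nonneg : 0 <= ramp_top.
Proof.
  unfold ramp_top. pose proof ramp_len_ge1.
  pose proof (ramp_scale_pos _ _ ramp_len_ge1 base_frac_range).
  pose proof (ramp_nonneg _ _ ramp_len_ge1 defect_unit defect_small m ltac:(lra)). nra.
Qed.

Lemma ramp_neighbour z : (Z.of_nat ramp_base - 1 <= z <= Z.of_nat top)%Z ->
  (1 - P) * (ramp_scale m P * ramp m defect (IZR (z - Z.of_nat ramp_base + 1))) <= lfrac z * profile z.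
Proof.
  intros Hz. pose proof base_frac_range. pose proof (ramp_scale_pos _ _ ramp_len_ge1 base_frac_range).
  destruct (Z.eq_dec z (Z.of_nat ramp_base - 1)) as [E|Hne].
  - rewrite E, profile_below by lia.
    replace (Z.of_nat ramp_base - 1 - Z.of_nat ramp_base + 1)%Z with 0%Z by lia.
    unfold ramp. rewrite Rmult_0_l, !Rmult_0_r. lra.
  - rewrite profile_on_ramp by lia. pose proof (ramp_coord_bounds z ltac:(lia)).
    pose proof (ramp_nonneg _ _ ramp_len_ge1 defect_unit defect_small (IZR (z - Z.of_nat ramp_base + 1)) ltac:(lra)).
    assert (1 - P <= lfrac z) by (unfold lfrac; pose proof (hfrac_anti (Z.of_nat ramp_base) z ltac:(lia)); lra).
    apply Rmult_le_compat_r; [nra|lra].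
Qed.

Lemma reach_pile_low z : (z <= Z.of_nat s)%Z -> reach sigma z i = 1.
Proof. intros Hz. unfold reach. destruct (Z.leb_spec z (Z.of_nat s)); [reflexivity|lia]. Qed.

Lemma IZR_shift z b c : IZR (z - b + 1) + IZR c = IZR (z + c - b + 1).
Proof. rewrite <- plus_IZR. f_equal. ring. Qed.

Lemma profile_sub_ramp z : (Z.of_nat ramp_base <= z <= Z.of_nat top)%Z ->
  profile z <= / 2 * ((reach sigma (z - 1)%Z i + lfrac (z - 1)%Z * profile (z - 1)%Z) +
                     (reach sigma (z + 1)%Z i + lfrac (z + 1)%Z * profile (z + 1)%Z)).
Proof.
  intros Hz. destruct ramp_len_spec as [_ [_ [_ [E _]]]].
  pose proof (ramp_coord_bounds z Hz) as Hy. set (y := IZR (z - Z.of_nat ramp_base + 1)) in *.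
  rewrite profile_on_ramp, (reach_pile_low (z - 1)) by lia. fold y.
  pose proof (ramp_neighbour (z - 1) ltac:(lia)) as Hlow.
  replace (IZR (z - 1 - Z.of_nat ramp_base + 1)) with (y - 1) in Hlow
    by (unfold y; rewrite <- (IZR_shift z _ (-1)); simpl; ring).
  pose proof (reach_unit sigma (z + 1)%Z i).
  destruct (Z.eq_dec z (Z.of_nat top)) as [Etop|Hne].
  - assert (Ey : y = m) by (unfold y; rewrite Etop, INR_IZR_INZ; f_equal; lia).
    replace (lfrac (z + 1)%Z * profile (z + 1)%Z) with ((1 - defect) * (ramp_scale m P * ramp m defect m)).
    + rewrite Ey in Hlow |- *. apply ramp_sub_end; auto using ramp_len_ge1, base_frac_range, defect_unit, defect_small.
      apply reach_unit.
    + replace (z + 1)%Z with (Z.of_nat (top + 1)) by lia.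
      rewrite profile_upper. unfold ramp_top. change (rho_prod 1) with (1 * rho (top + 0)).
      rewrite Nat.add_0_r. unfold defect at 1. ring.
  - assert (y <= m - 1).
    { unfold y. rewrite INR_IZR_INZ, <- minus_IZR. apply IZR_le. lia. }
    pose proof (ramp_neighbour (z + 1) ltac:(lia)) as Hup.
    replace (IZR (z + 1 - Z.of_nat ramp_base + 1)) with (y + 1) in Hup
      by (unfold y; rewrite <- (IZR_shift z _ 1); reflexivity).
    apply ramp_sub_interior; auto using ramp_len_ge1, base_frac_range, defect_unit, defect_small.
    + lra.
    + apply reach_unit.
Qed.

Lemma profile_sub_upper d :
  let z := Z.of_nat (top + S d) in
  profile z <= / 2 * ((reach sigma (z - 1)%Z i + lfrac (z - 1)%Z * profile (z - 1)%Z) +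
                     (reach sigma (z + 1)%Z i + lfrac (z + 1)%Z * profile (z + 1)%Z)).
Proof.
  intros z. set (k := (top + d)%nat).
  replace (z - 1)%Z with (Z.of_nat (top + d)) by (unfold z; lia).
  replace (z + 1)%Z with (Z.of_nat (top + S (S d))) by (unfold z; lia).
  unfold z. rewrite !profile_upper. unfold rho_prod. simpl rprod. fold (rho_prod d).
  replace (top + S d)%nat with (S k) by (unfold k; lia).
  replace (top + S (S d))%nat with (k + 2)%nat by (unfold k; lia).
  replace (s + 1 + S d)%nat with (S k) by (unfold k; lia). fold k.
  pose proof (rho_step k ltac:(unfold k; lia)).
  set (X := ramp_top * rho_prod d).
  assert (0 <= X) by (pose proof ramp_top_nonneg; pose proof (rho_prod_nonneg d); unfold X; nra).
  pose proof (rho_unit k). pose proof (rho_unit (S k)).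
  pose proof (lfrac_unit (Z.of_nat k)). pose proof (lfrac_unit (Z.of_nat (k + 2))).
  pose proof (reach_unit sigma (Z.of_nat k) i). pose proof (reach_unit sigma (Z.of_nat (k + 2)) i).
  assert (X * (rho k * (2 - lfrac (Z.of_nat (k + 2)) * rho (S k))) <= X * lfrac (Z.of_nat k))
    by (apply Rmult_le_compat_l; assumption).
  replace (ramp_top * (rho_prod d * rho k)) with (X * rho k) by (unfold X; ring).
  replace (ramp_top * (rho_prod d * rho k * rho (S k))) with (X * rho k * rho (S k)) by (unfold X; ring).
  nra.
Qed.

Lemma profile_sub z : (1 <= z)%Z -> 0 < profile z ->
  profile z <= / 2 * ((reach sigma (z - 1)%Z i + lfrac (z - 1)%Z * profile (z - 1)%Z) +
                     (reach sigma (z + 1)%Z i + lfrac (z + 1)%Z * profile (z + 1)%Z)).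
Proof.
  intros Hz Hpos.
  destruct (Z.ltb_spec z (Z.of_nat ramp_base)) as [Hlow|Hge].
  { rewrite profile_below in Hpos by exact Hlow. lra. }
  destruct (Z.leb_spec z (Z.of_nat top)) as [Hle|Hgt].
  - now apply profile_sub_ramp.
  - replace z with (Z.of_nat (top + S (Z.to_nat (z - Z.of_nat top) - 1))) by lia.
    apply profile_sub_upper.
Qed.

Lemma profile_beyond : profile (Z.of_nat (2 * M + 2) + 1) = 0.
Proof.
  pose proof height_le_max.
  replace (Z.of_nat (2 * M + 2) + 1)%Z with (Z.of_nat (top + (2 * M + 2 - s))) by lia.
  rewrite profile_upper, rho_prod_beyond by lia. ring.
Qed.

Lemma rho_prod_ge : / 2 * exp (- (3 / 2 * Lam)) <= rho_prod (M - s).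
Proof.
  pose proof height_le_max.
  unfold rho_prod, rho. rewrite rprod_mult.
  apply Rmult_le_compat; [lra|left; apply exp_pos| |].
  - rewrite cutoff_prod by lia.
    replace (2 * M + 2 - (s + 1) + 1 - (M - s))%nat with (M + 2)%nat by lia.
    assert (0 < INR (2 * M + 2 - (s + 1) + 1)) by (apply lt_0_INR; lia).
    assert (INR (2 * M + 2 - (s + 1) + 1) <= 2 * INR (M + 2)).
    { replace (2 * INR (M + 2)) with (INR (2 * (M + 2))) by (rewrite mult_INR; reflexivity).
      apply le_INR. lia. }
    apply Rmult_le_reg_r with (INR (2 * M + 2 - (s + 1) + 1)); [assumption|].
    unfold Rdiv. rewrite Rmult_assoc, Rinv_l; lra.
  - apply Rle_trans with (exp (- (3 * rsum (M - s) (fun e => tail_mass (s + 1 + e))))).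
    { apply exp_le_mono. pose proof (tail_mass_sum (M - s)). lra. }
    rewrite <- rsum_scal, <- rsum_opp, <- rprod_exp. apply rprod_le.
    intros e _. split; [left; apply exp_pos|]. apply theta_ge_exp. lia.
Qed.

Lemma ramp_top_ge_len : m * m <= 16 * (Lam + 1) * ramp_top.
Proof.
  pose proof ramp_len_ge1. pose proof base_frac_range. pose proof base_frac_moment.
  pose proof (ramp_shift_bounds _ _ ramp_len_ge1 defect_unit defect_small).
  pose proof ramp_top_nonneg.
  assert (E : ramp_top * (2 * (P * (m + 1) ^ 2 + 4)) = ramp m defect m)
    by (unfold ramp_top, ramp_scale; field; nra).
  assert (ramp m defect m >= m * (m + 1) / 2) by (unfold ramp; nra).
  assert (ramp_top * (2 * (P * (m + 1) ^ 2 + 4)) <= ramp_top * (2 * (4 * Lam + 4)))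
    by (apply Rmult_le_compat_l; nra).
  nra.
Qed.

Lemma ramp_top_ge : INR s ^ 2 + 1 <= 131072 * exp (3 / 2 * Lam) * ramp_top.
Proof.
  pose proof ramp_top_nonneg. pose proof ramp_top_ge_len. pose proof Lam_nonneg.
  pose proof ramp_div_bounds. pose proof (pos_INR ramp_div).
  pose proof (sq_affine_le_exp Lam (INR ramp_div) Lam_nonneg ltac:(lra)).
  destruct ramp_len_spec as [_ [_ [_ [_ [_ Hlen]]]]].
  assert (Htop : INR top <= 2 * INR ramp_div * m).
  { replace (2 * INR ramp_div * m) with (INR (2 * ramp_div * ramp_len)) by (rewrite !mult_INR; reflexivity).
    now apply le_INR. }
  assert (Hs : INR s ^ 2 + 1 <= INR top ^ 2) by (rewrite plus_INR; simpl; pose proof (pos_INR s); nra).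
  assert (INR top ^ 2 <= 4 * INR ramp_div ^ 2 * (m * m)) by (pose proof (pos_INR top); nra).
  assert (4 * INR ramp_div ^ 2 * (m * m) <= 4 * INR ramp_div ^ 2 * (16 * (Lam + 1) * ramp_top))
    by (apply Rmult_le_compat_l; nra).
  assert (64 * (INR ramp_div ^ 2 * (Lam + 1)) * ramp_top <= 64 * (2048 * exp (3 / 2 * Lam)) * ramp_top)
    by (apply Rmult_le_compat_r; nra).
  nra.
Qed.

Lemma profile_at_start : (INR s ^ 2 + 1) * exp (- (3 * Lam)) / 262144 <= profile (Z.of_nat M + 1).
Proof.
  pose proof height_le_max. pose proof ramp_top_ge. pose proof rho_prod_ge. pose proof ramp_top_nonneg.
  replace (Z.of_nat M + 1)%Z with (Z.of_nat (top + (M - s))) by lia. rewrite profile_upper.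
  set (E := exp (3 / 2 * Lam)). assert (HE : 0 < E) by apply exp_pos.
  replace (exp (- (3 * Lam))) with (/ E * / E)
    by (unfold E; rewrite <- Rinv_mult, <- exp_plus, <- exp_Ropp; f_equal; f_equal; field).
  replace (exp (- (3 / 2 * Lam))) with (/ E) in * by (unfold E; now rewrite exp_Ropp).
  apply Rle_trans with (ramp_top * (/ 2 * / E)); [|apply Rmult_le_compat_l; assumption].
  apply Rmult_le_reg_r with (262144 * E * E); [nra|].
  replace ((INR s ^ 2 + 1) * (/ E * / E) / 262144 * (262144 * E * E)) with (INR s ^ 2 + 1) by (field; lra).
  replace (ramp_top * (/ 2 * / E) * (262144 * E * E)) with (131072 * E * ramp_top) by (field; lra).
  assumption.
Qed.

End Profile.

Section Deposition.

Variables (N : nat) (sigma : nat -> nat) (i : nat).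
Hypothesis N_pos : (0 < N)%nat.
Hypothesis i_lt_N : (i < N)%nat.

Local Notation A := (fun y => reach sigma y i).
Local Notation Q := (low_count N sigma).

Lemma attach_reach_ge0 z : 0 <= A z.
Proof. apply reach_unit. Qed.

Lemma attach_reach_low_count z : A z + Q z <= INR N.
Proof. now apply reach_add_low_count. Qed.

Lemma attach_within_0 z : attach_within N sigma i O z = 0.
Proof. reflexivity. Qed.

Lemma attach_within_step T z : attach_within N sigma i (S T) z = walk_step A Q (INR N) (attach_within N sigma i T) z.
Proof. now apply attach_within_S. Qed.

Definition attach_limit : Z -> R :=
  walk_limit A Q (INR N) (INR_N_pos N N_pos) attach_reach_ge0 (low_count_nonneg N sigma)
    attach_reach_low_count (attach_within N sigma i) attach_within_0 attach_within_step.

Lemma attach_limit_cv z : Un_cv (fun T => attach_within N sigma i T z) (attach_limit z).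
Proof. apply walk_limit_cv. Qed.

Lemma attach_limit_ge0 z : 0 <= attach_limit z.
Proof. apply walk_limit_ge0. Qed.

Lemma attach_limit_super z : walk_step A Q (INR N) attach_limit z <= attach_limit z.
Proof. apply walk_limit_super. Qed.

Hypothesis mass_lt_half : INR (nsum N sigma) < INR N / 2.

Lemma scaled_profile_sub z : (1 <= z)%Z -> 0 < profile N sigma i z / INR N ->
  profile N sigma i z / INR N <= walk_step A Q (INR N) (fun y => profile N sigma i y / INR N) z.
Proof.
  intros Hz Hpos. pose proof (INR_N_pos N N_pos).
  assert (Hprof : 0 < profile N sigma i z).
  { apply Rmult_lt_reg_r with (/ INR N); [now apply Rinv_0_lt_compat|]. lra. }
  pose proof (profile_sub N sigma N_pos mass_lt_half i i_lt_N z Hz Hprof).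
  unfold walk_step. rewrite !low_count_lfrac by exact N_pos.
  apply Rle_trans with (/ 2 * ((reach sigma (z - 1)%Z i + lfrac N sigma (z - 1)%Z * profile N sigma i (z - 1)%Z) +
    (reach sigma (z + 1)%Z i + lfrac N sigma (z + 1)%Z * profile N sigma i (z + 1)%Z)) / INR N).
  - unfold Rdiv. apply Rmult_le_compat_r; [left; now apply Rinv_0_lt_compat|assumption].
  - right. field. lra.
Qed.

Lemma attach_limit_ge :
  / 262144 * ((INR (sigma i) ^ 2 + 1) / INR N) * exp (- (3 * Lam N sigma))
  <= attach_limit (explorer_start N sigma).
Proof.
  pose proof (INR_N_pos N N_pos). unfold explorer_start.
  apply Rle_trans with (profile N sigma i (Z.of_nat (nmax N sigma) + 1) / INR N).
  - pose proof (profile_at_start N sigma N_pos mass_lt_half i i_lt_N).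
    apply Rle_trans with ((INR (sigma i) ^ 2 + 1) * exp (- (3 * Lam N sigma)) / 262144 / INR N).
    + right. field. lra.
    + unfold Rdiv at 1. apply Rmult_le_compat_r; [left; now apply Rinv_0_lt_compat|assumption].
  - apply (walk_max_principle A Q (INR N) (INR_N_pos N N_pos) attach_reach_ge0 (low_count_nonneg N sigma)
      attach_reach_low_count attach_limit (fun y => profile N sigma i y / INR N) (Z.of_nat (2 * nmax N sigma + 2))).
    + apply low_count_0.
    + apply attach_limit_ge0.
    + apply attach_limit_super.
    + rewrite profile_beyond by assumption. unfold Rdiv. lra.
    + intros y Hy. apply scaled_profile_sub. lia.
    + lia.
Qed.

End Deposition.

Theorem lemma2p2 :
  exists kappaD C : R, 0 < kappaD /\ 0 < C /\
  forall (N : nat) (sigma : nat -> nat) (i : nat),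
    (2 <= N)%nat ->
    INR (nsum N sigma) < INR N / 2 ->
    (i < N)%nat ->
    (exists l, Un_cv (fun T => attach_within N sigma i T (explorer_start N sigma)) l) /\
    (forall l, Un_cv (fun T => attach_within N sigma i T (explorer_start N sigma)) l ->
       kappaD * ((INR (sigma i) ^ 2 + 1) / INR N) *
         exp (- (3 / INR N) * rsum N (fun j => INR (sigma j) * (INR (sigma j) + 1))
                * (1 + C * (INR (nsum N sigma) / INR N)))
       <= l).
Proof.
  exists (/ 262144), 1. split; [lra|]. split; [lra|].
  intros N sigma i HN Hmass Hi.
  assert (N_pos : (0 < N)%nat) by lia.
  pose proof (attach_limit_cv N sigma i N_pos Hi (explorer_start N sigma)) as Hcv.
  split; [now exists (attach_limit N sigma i N_pos Hi (explorer_start N sigma))|].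
  intros l Hl. rewrite (UL_sequence _ _ _ Hl Hcv).
  eapply Rle_trans; [|exact (attach_limit_ge N sigma i N_pos Hi Hmass)].
  apply Rmult_le_compat_l.
  - pose proof (INR_N_pos N N_pos). pose proof (pos_INR (sigma i)).
    apply Rmult_le_pos; [lra|]. apply Rmult_le_pos; [nra|left; now apply Rinv_0_lt_compat].
  - rewrite Rmult_1_l. apply exp_penalty_le; [assumption|].
    apply Rmult_le_pos; [apply pos_INR|left; now apply Rinv_0_lt_compat, INR_N_pos].
Qed.
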